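(* Let $G$ be a tree with vertex set $V$. Then \[R(G)\geq 1+\sum_{v\in V}\left(\sqrt{d_v}-1\right),\] with equality if $G$ is a star.
   Context: $d_v$ is the degree of vertex $v$; the Randi\'c index is $R(G)=\sum_{uv\in E(G)}\frac{1}{\sqrt{d_ud_v}}$ (equal to $0$ for a single vertex). A star is a tree with one vertex adjacent to all others. *)

From HB Require Import structures.
From mathcomp Require Import all_boot all_order all_algebra.
Set Implicit Arguments. Unset Strict Implicit. Unset Printing Implicit Defensive.
Import Order.TTheory GRing.Theory Num.Theory.

Definition simple_graph (T : finType) (e : rel T) : Prop :=
  symmetric e /\ irreflexive e.

Definition deg (T : finType) (e : rel T) (v : T) : nat := #|[set w | e v w]|.

Definition edges (T : finType) (e : rel T) : {set {set T}} :=
  [set [set x; y] | x in T, y in T & e x y].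

Definition gconnected (T : finType) (e : rel T) : Prop :=
  forall x y : T, connect e x y.

(* no cycle: no closed walk x, p_1, ..., p_k, x with k >= 2 distinct vertices
   (i.e. a cycle of length >= 3) *)
Definition acyclic (T : finType) (e : rel T) : Prop :=
  forall (x : T) (p : seq T),
    path e x p -> uniq (x :: p) -> 2 <= size p -> ~~ e (last x p) x.

Definition is_tree (T : finType) (e : rel T) : Prop :=
  [/\ simple_graph e, 0 < #|T|, gconnected e & acyclic e].

Definition is_star (T : finType) (e : rel T) : Prop :=
  is_tree e /\ exists c : T, forall v : T, v != c -> e c v.

Local Open Scope ring_scope.

Definition randic (R : rcfType) (T : finType) (e : rel T) : R :=
  \sum_(E in edges e) 1 / Num.sqrt ((\prod_(v in E) deg e v)%N)%:R.

(* Write [x_v = 1/sqrt d_v].  Double counting gives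
     [sum_v sqrt d_v = sum_v d_v x_v = sum_(uv in E) (x_u + x_v)], hence
     [R(G) - 1 - sum_v (sqrt d_v - 1) = sum_(uv in E) (1 - x_u)(1 - x_v) + (n - 1 - m)],
   where [n] and [m] count vertices and edges.  Every product is nonnegative since
   [d_v >= 1], and [m <= n - 1] because an acyclic graph always has a vertex with at
   most one neighbour (the end of a maximal path), so removing it loses at most one
   edge.  In a star every edge meets a leaf, where [x = 1], and [m = n - 1] since the
   centre is adjacent to all others. *)
From HB Require Import structures.
From mathcomp Require Import all_boot all_order all_algebra.
From mathcomp Require Import zify ring lra.
Set Implicit Arguments. Unset Strict Implicit. Unset Printing Implicit Defensive.
Import Order.TTheory GRing.Theory Num.Theory.
Local Open Scope ring_scope.

Section SimpleGraph.
Variables (T : finType) (e : rel T).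
Hypotheses (esym : symmetric e) (eirr : irreflexive e).

Lemma edgesP E : reflect (exists a b, e a b /\ E = [set a; b]) (E \in edges e).
Proof.
apply: (iffP imset2P) => [[a b _]|[a [b [eab ->]]]].
  by rewrite inE => eab ->; exists a, b.
by exists a b; rewrite ?inE.
Qed.

Lemma adj_neq a b : e a b -> a != b.
Proof. by apply: contraTneq => ->; rewrite eirr. Qed.

Lemma edges_at v :
  [set E in edges e | v \in E] = [set [set v; w] | w in [set w | e v w]].
Proof.
apply/setP => E; rewrite inE; apply/andP/imsetP => [[/edgesP[a [b [eab ->]]]]|[w]].
  rewrite !inE => /orP[]/eqP ->; first by exists b; rewrite ?inE.
  by exists a; rewrite 1?setUC // inE esym.
by rewrite inE => evw ->; split; [apply/edgesP; exists v, w | rewrite !inE eqxx].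
Qed.

Lemma card_edges_at v : #|[set E in edges e | v \in E]| = deg e v.
Proof.
rewrite edges_at card_in_imset // => w1 w2; rewrite !inE => evw1 _ eq12.
have : w1 \in [set v; w2] by rewrite -eq12 !inE eqxx orbT.
by rewrite !inE eq_sym (negbTE (adj_neq evw1)) => /eqP.
Qed.

Lemma sum_edges_endpoints (V : nmodType) (F : T -> V) :
  \sum_(E in edges e) \sum_(v in E) F v = \sum_v F v *+ deg e v.
Proof.
rewrite (exchange_big_dep predT) //=; apply: eq_bigr => v _.
rewrite sumr_const -card_edges_at; congr (_ *+ _).
by apply: eq_card => E; rewrite !inE.
Qed.

Definition edges_within (S : {set T}) := [set E in edges e | E \subset S].

Lemma edges_within_setD1 (S : {set T}) y :
  edges_within S \subset
    edges_within (S :\ y) :|: [set [set y; w] | w in [set w in S | e y w]].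
Proof.
apply/subsetP => E; rewrite !inE => /andP[/edgesP[a [b [eab ->]]] sabS].
have [aS bS] : a \in S /\ b \in S.
  by split; apply: (subsetP sabS); rewrite !inE eqxx ?orbT.
case yab: (y \in [set a; b]).
  apply/orP; right; apply/imsetP; move: yab; rewrite !inE => /orP[]/eqP ->.
    by exists b; rewrite // inE bS.
  by exists a; rewrite 1?setUC // inE aS esym.
apply/orP; left; apply/andP; split; first by apply/edgesP; exists a, b.
apply/subsetP => z zab; rewrite !inE (subsetP sabS _ zab) andbT.
by apply: contraFneq yab => <-.
Qed.

Section Acyclic.
Hypothesis eac : acyclic e.

Lemma acyclic_chord x p w :
  path e x p -> uniq (x :: p) -> e x w -> w \in p -> w = head x p.
Proof.
case: p => [//|h q] hp hu exw /predU1P[//|wq].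
case/splitPr: wq hp hu => q1 q2 hp hu.
suff: ~~ e (last x (h :: rcons q1 w)) x by rewrite /= last_rcons esym exw.
apply: eac.
- by move: hp; rewrite /= cat_path rcons_path => /and3P[-> -> /andP[]].
- move: hu; rewrite -[x :: _]/((x :: h :: q1) ++ w :: q2) -cat_rcons cat_uniq.
  by case/andP.
- by rewrite /= size_rcons.
Qed.

Lemma path_leaf (S : {set T}) x p :
  path e x p -> uniq (x :: p) -> {subset x :: p <= S} ->
  exists2 y, y \in S & (#|[set w in S | e y w]| <= 1)%N.
Proof.
have [n] := ubnP (#|T| - size p)%N; elim: n x p => // n IH x p bound hp hu pS.
case: (boolP [exists w in S, e x w && (w \notin x :: p)]).
  case/exists_inP => w wS /andP[exw wp].
  have hu' : uniq (w :: x :: p) by rewrite cons_uniq wp hu.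
  have := max_card (mem (w :: x :: p)); rewrite (card_uniqP hu') /= => size_le.
  apply: (IH w (x :: p)) => //=; first by move: bound size_le => /=; lia.
    by rewrite esym exw hp.
  by move=> z /predU1P[-> //|/pS].
rewrite negb_exists_in => /forall_inP not_ext; exists x; first by apply/pS/mem_head.
rewrite -(cards1 (head x p)); apply/subset_leq_card/subsetP => w.
rewrite !inE => /andP[wS exw]; have := not_ext w wS; rewrite exw negbK.
case/predU1P => [wx|wp]; first by move: exw; rewrite wx eirr.
by rewrite (acyclic_chord hp hu exw wp).
Qed.

Lemma acyclic_leaf (S : {set T}) :
  S != set0 -> exists2 y, y \in S & (#|[set w in S | e y w]| <= 1)%N.
Proof. by case/set0Pn => x xS; apply: (@path_leaf S x [::]) => // z /predU1P[->|]. Qed.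

Lemma card_edges_within (S : {set T}) : (#|edges_within S| <= #|S|.-1)%N.
Proof.
have [n] := ubnP #|S|; elim: n S => // n IH S ltSn.
have [->|/acyclic_leaf[y yS leaf_y]] := eqVneq S set0.
  rewrite cards0 leqn0 cards_eq0; apply/eqP/setP => E; rewrite !inE.
  apply/negP => /andP[/edgesP[a [b [_ ->]]] /subsetP/(_ a)].
  by rewrite !inE eqxx => /(_ isT).
set N := [set w in S | e y w].
have NSy : (#|N| <= #|S :\ y|)%N.
  apply/subset_leq_card/subsetP => w; rewrite !inE => /andP[wS eyw].
  by rewrite wS andbT eq_sym adj_neq.
have split_y : (#|edges_within S| <= #|edges_within (S :\ y)| + #|N|)%N.
  apply: leq_trans (subset_leq_card (edges_within_setD1 S y)) _.
  by rewrite (leq_trans (leq_card_setU _ _)) // leq_add2l leq_imset_card.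
have cardS : #|S| = #|S :\ y|.+1 by rewrite (cardsD1 y S) yS.
have le_IH := IH (S :\ y) ltac:(by rewrite -ltnS -cardS).
move: le_IH split_y leaf_y NSy cardS.
move: #|edges_within S| #|edges_within (S :\ y)| #|N| #|S| #|S :\ y|; lia.
Qed.

Lemma card_edges : (#|edges e| <= #|T|.-1)%N.
Proof.
rewrite -cardsT; apply: leq_trans (card_edges_within _).
by apply/subset_leq_card/subsetP => E; rewrite inE subsetT => ->.
Qed.

Section Star.
Variable c : T.
Hypothesis c_adj : forall v, v != c -> e c v.

Lemma star_card_edges : (#|T|.-1 <= #|edges e|)%N.
Proof.
have -> : #|T|.-1 = deg e c.
  rewrite -(cardsC1 c) /deg; apply: eq_card => w; rewrite !inE.
  by apply/idP/idP => [/c_adj //|/adj_neq]; rewrite eq_sym.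
by rewrite -card_edges_at; apply/subset_leq_card/subsetP => E; rewrite inE => /andP[].
Qed.

Lemma star_edge_center a b : e a b -> (a == c) || (b == c).
Proof.
move=> eab; apply/negPn/negP; rewrite negb_or => /andP[ac bc].
have := @eac c [:: a; b]; rewrite /= c_adj // eab esym c_adj //.
by rewrite !inE !negb_or !(eq_sym c) ac bc (adj_neq eab) => /(_ isT isT isT).
Qed.

Lemma star_deg_leaf v : v != c -> deg e v = 1%N.
Proof.
move=> vc; rewrite /deg -(cards1 c); apply: eq_card => w; rewrite !inE.
apply/idP/eqP => [evw|->]; last by rewrite esym c_adj.
by have := star_edge_center evw; rewrite (negbTE vc) => /eqP.
Qed.

End Star.

End Acyclic.

End SimpleGraph.

Lemma inv_sqrt_nat_le1 (R : rcfType) (n : nat) :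
  (0 < n)%N -> (Num.sqrt (n%:R : R))^-1 <= 1.
Proof.
move=> n_gt0; rewrite invf_le1 ?sqrtr_gt0 ?ltr0n //.
by rewrite -[leLHS]sqrtr1 ler_sqrt ?ler0n // ler1n.
Qed.

Lemma inv_sqrt_natMn (R : rcfType) (n : nat) :
  (Num.sqrt (n%:R : R))^-1 *+ n = Num.sqrt n%:R.
Proof.
case: n => [|n]; first by rewrite mulr0n sqrtr0.
have sqrt_neq0 : Num.sqrt (n.+1%:R : R) != 0 by rewrite sqrtr_eq0 -ltNge ltr0Sn.
by rewrite -[LHS]mulr_natr -[X in _ * X](sqr_sqrtr (ler0n R n.+1)) expr2 mulKf.
Qed.

Section Randic.
Variables (R : rcfType) (T : finType) (e : rel T).
Hypotheses (esym : symmetric e) (eirr : irreflexive e).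

Definition inv_sqrt_deg (v : T) : R := 1 / Num.sqrt (deg e v)%:R.

Definition randic_defect (E : {set T}) : R :=
  1 / Num.sqrt (\prod_(v in E) deg e v)%N%:R + 1 - \sum_(v in E) inv_sqrt_deg v.

Lemma randic_defect_set2 a b : e a b ->
  randic_defect [set a; b] = (1 - inv_sqrt_deg a) * (1 - inv_sqrt_deg b).
Proof.
move=> eab; have a_notin_b : a \notin [set b] by rewrite inE (adj_neq eirr eab).
rewrite /randic_defect /inv_sqrt_deg !big_setU1 //= !big_set1.
by rewrite natrM sqrtrM ?ler0n // !div1r invfM; ring.
Qed.

Lemma inv_sqrt_deg_le1 a b : e a b -> inv_sqrt_deg a <= 1.
Proof.
move=> eab; rewrite /inv_sqrt_deg div1r inv_sqrt_nat_le1 //.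
by apply/card_gt0P; exists b; rewrite inE.
Qed.

Lemma randic_defect_ge0 E : E \in edges e -> 0 <= randic_defect E.
Proof.
case/edgesP => a [b [eab ->]]; rewrite randic_defect_set2 //.
rewrite mulr_ge0 // subr_ge0; first exact: inv_sqrt_deg_le1 eab.
by apply: (inv_sqrt_deg_le1 (b := a)); rewrite esym.
Qed.

Lemma randic_defect_leaf a b :
  e a b -> deg e a = 1%N -> randic_defect [set a; b] = 0.
Proof.
move=> eab deg_a.
by rewrite randic_defect_set2 // /inv_sqrt_deg deg_a sqrtr1 divr1 subrr mul0r.
Qed.

Lemma randic_decomposition :
  randic R e = 1 + \sum_v (Num.sqrt (deg e v)%:R - 1)
               + \sum_(E in edges e) randic_defect E + (#|T|%:R - 1 - #|edges e|%:R).
Proof.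
have sum_sqrt_deg : \sum_v inv_sqrt_deg v *+ deg e v = \sum_v Num.sqrt (deg e v)%:R.
  by apply: eq_bigr => v _; rewrite /inv_sqrt_deg div1r inv_sqrt_natMn.
rewrite /randic_defect !big_split /= !sumrN sum_edges_endpoints // sum_sqrt_deg.
rewrite /randic !sumr_const; ring.
Qed.

End Randic.

Theorem theorem4p1 (R : rcfType) (T : finType) (e : rel T) :
  is_tree e ->
  (1 + \sum_(v : T) (Num.sqrt (deg e v)%:R - 1) <= randic R e) /\
  (is_star e -> randic R e = 1 + \sum_(v : T) (Num.sqrt (deg e v)%:R - 1)).
Proof.
move=> [[esym eirr] T_gt0 _ eac]; rewrite (randic_decomposition R esym eirr).
have defect_ge0 : 0 <= \sum_(E in edges e) randic_defect R e E.
  by apply: sumr_ge0 => E; apply: randic_defect_ge0.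
have card_T : #|T|%:R = (#|T|.-1)%:R + 1 :> R by rewrite natr1 prednK.
have edges_le : #|edges e|%:R <= (#|T|.-1)%:R :> R by rewrite ler_nat card_edges.
split=> [|[_ [c c_adj]]]; first lra.
have edges_eq : #|edges e| = #|T|.-1.
  by apply/anti_leq; rewrite card_edges // (star_card_edges esym eirr c_adj).
have defect0 : \sum_(E in edges e) randic_defect R e E = 0.
  have deg_leaf := star_deg_leaf esym eirr eac c_adj.
  apply: big1 => E /edgesP[a [b [eab ->]]].
  have [/eqP ac|/eqP bc] := orP (star_edge_center esym eirr eac c_adj eab).
    rewrite setUC randic_defect_leaf 1?esym // deg_leaf //.
    by rewrite -ac eq_sym (adj_neq eirr eab).
  by rewrite randic_defect_leaf // deg_leaf // -bc (adj_neq eirr eab).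
rewrite defect0 edges_eq card_T; ring.
Qed.
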